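(* Let $G$ be a connected graph with $\delta(G)=1$, girth at least $15$, and $G\in\mathcal U$. If $s_1$ is a single star support vertex of $G$, then there is no double star support vertex $s$ of $G$ with $d_G(s_1,s)=3$.
   Context: All graphs are finite and simple. A set $P\subseteq V(G)$ is an open packing if no two distinct vertices of $P$ have a common neighbor; it is maximal if maximal under inclusion among open packings. $\rho^o(G)$ is the maximum size of an open packing and $\rho^o_L(G)$ the minimum size of a maximal open packing; $\mathcal U$ is the class of graphs with $\rho^o_L(G)=\rho^o(G)$. A leaf is a vertex of degree $1$; a support vertex is a vertex adjacent to at least one leaf; $S_G$ is the set of support vertices. A single star support vertex is a support vertex not adjacent to any other support vertex; a double star support vertex is a support vertex adjacent to another support vertex. *)

From mathcomp Require Import all_boot.
Set Implicit Arguments. Unset Strict Implicit. Unset Printing Implicit Defensive.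

Section Graph.
Variables (T : finType) (e : rel T).

Definition simple_graph := symmetric e /\ irreflexive e.

Definition nbhd (x : T) : {set T} := [set y | e x y].
Definition deg (x : T) : nat := #|nbhd x|.

Definition connected_graph := forall x y : T, connect e x y.

Definition min_degree_one := (exists x : T, deg x = 1) /\ (forall x : T, 1 <= deg x).

(* girth at least g: every cycle (distinct vertices v_1..v_k, k >= 3,
   consecutive ones adjacent and v_k adjacent to v_1) has length >= g.
   Acyclic graphs (infinite girth) satisfy it. *)
Definition girth_at_least (g : nat) :=
  forall s : seq T, uniq s -> 3 <= size s -> cycle e s -> g <= size s.

Definition walk_of_length (x y : T) (n : nat) :=
  exists s : seq T, [/\ size s = n, path e x s & last x s = y].

Definition dist_eq (x y : T) (n : nat) :=
  walk_of_length x y n /\ forall m, m < n -> ~ walk_of_length x y m.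

Definition open_packing (P : {set T}) : bool :=
  [forall x in P, forall y in P, (x != y) ==> [forall z, ~~ (e x z && e y z)]].

Definition maximal_open_packing (P : {set T}) : bool :=
  open_packing P && [forall Q : {set T}, (open_packing Q && (P \subset Q)) ==> (Q == P)].

Definition rho_o : nat := \max_(P : {set T} | open_packing P) #|P|.

Definition rho_oL : nat := \big[minn/#|T|]_(P : {set T} | maximal_open_packing P) #|P|.

Definition in_U := rho_oL = rho_o.

Definition leaf (x : T) := deg x = 1.
Definition support_vertex (s : T) := exists x, e s x /\ leaf x.
Definition single_star_support (s : T) :=
  support_vertex s /\ forall t, e s t -> ~ support_vertex t.
Definition double_star_support (s : T) :=
  support_vertex s /\ exists t, e s t /\ support_vertex t.

End Graph.

(* Fix a path s1 - a - b - s, a leaf l at s and a support neighbour t of s.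
   The argument rests on an exchange principle for U (U_exchange): if an open
   packing A "covers" an open packing Y and all vertices sharing a neighbour
   with Y, except those of some X inside A, then |Y| <= |X|, since a largest
   maximal open packing P containing A can be traded for (P minus X) plus Y.
   Girth at least 15 makes the distance layers around s1 tree-like up to
   depth 7 (parent_unique, no_layer_edge).  Case A: a neighbour c <> a of s1 is
   adjacent to a support vertex w <> s1; then {c, s} covers the leaves at s1,
   w and t, so 3 <= 2.  Case B: otherwise b, together with a vertex two steps
   further away from s1 than each vertex w on a side branch, is an open packing
   covering {l, s1} and its surroundings except b, so 2 <= 1. *)
From mathcomp Require Import all_boot zify.
Set Implicit Arguments. Unset Strict Implicit. Unset Printing Implicit Defensive.

Section Walks.
Variables (T : finType) (e : rel T).
Hypotheses (esym : symmetric e) (eirr : irreflexive e).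

Notation W := (walk_of_length e).
Notation D := (dist_eq e).

Lemma walk0 x y : W x y 0 -> x = y.
Proof. by case=> [[|? ?] [//= _ _ ->]]. Qed.

Lemma walk_refl x : W x x 0.
Proof. by exists [::]. Qed.

Lemma walk1 x y : W x y 1 <-> e x y.
Proof.
split; first by case=> [[|z [|? ?]]] [] //= _ /andP[h _] <-.
by move=> h; exists [:: y]; rewrite /= h.
Qed.

Lemma walk_cat x v y m n : W x v m -> W v y n -> W x y (m + n).
Proof.
case=> [p [<- pp <-]] [q [<- pq <-]]; exists (p ++ q).
by rewrite size_cat cat_path last_cat pp pq.
Qed.

Lemma walk_rcons x v y n : W x v n -> e v y -> W x y n.+1.
Proof. by move=> w /walk1 w1; rewrite -addn1; apply: walk_cat w w1. Qed.

(* Boolean version of W, needed to take the least length of a walk. *)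
Definition walkb x y n := [exists p : n.-tuple T, path e x p && (last x p == y)].

Lemma walkbP x y n : reflect (W x y n) (walkb x y n).
Proof.
apply: (iffP existsP) => [[p /andP[pp /eqP lp]]|[p [sz pp lp]]].
  by exists p; rewrite size_tuple.
have sz' : size p == n by rewrite sz.
by exists (Tuple sz'); rewrite /= pp lp eqxx.
Qed.

Lemma dist_exists x y n : W x y n -> exists k, D x y k.
Proof.
move=> w; have ex : exists n, walkb x y n by exists n; apply/walkbP.
exists (ex_minn ex); case: ex_minnP => m /walkbP wm min_m; split => // k km /walkbP wk.
by have := min_m k wk; rewrite leqNgt km.
Qed.

Lemma dist_le x y k n : D x y k -> W x y n -> k <= n.
Proof. by case=> _ min_k w; rewrite leqNgt; apply/negP => /min_k. Qed.

Lemma dist_uniq x y k k' : D x y k -> D x y k' -> k = k'.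
Proof. by move=> d d'; apply/eqP; rewrite eqn_leq (dist_le d d'.1) (dist_le d' d.1). Qed.

Lemma dist_neq x v v' k k' : D x v k -> D x v' k' -> k != k' -> v != v'.
Proof.
by move=> d d' kk'; apply: contraNneq kk' => vv'; rewrite vv' in d; rewrite (dist_uniq d d').
Qed.

Lemma dist_refl x : D x x 0.
Proof. by split=> //; apply: walk_refl. Qed.

Lemma dist1 x y : D x y 1 <-> e x y.
Proof.
split; first by case=> /walk1.
by move=> h; split=> [|[|//] _ /walk0 xy]; [apply/walk1 | move: h; rewrite xy eirr].
Qed.

Lemma dist_prefix x v y m n : W x v m -> W v y n -> D x y (m + n) -> D x v m.
Proof.
move=> w1 w2 d; split=> // m' lt_m' w'.
by have := dist_le d (walk_cat w' w2); lia.
Qed.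

Lemma dist_nbr x v w k : D x v k -> e v w ->
  exists k', [/\ D x w k', k' <= k.+1 & k <= k'.+1].
Proof.
move=> d h; have w' := walk_rcons d.1 h.
have [k' d'] := dist_exists w'; exists k'; split=> //; first exact: dist_le d' w'.
by apply: dist_le d _; apply: walk_rcons d'.1 _; rewrite esym.
Qed.

Lemma dist_common x z v1 v2 k1 k2 : D x v1 k1 -> e v1 z -> D x v2 k2 -> e v2 z ->
  exists k, [/\ D x z k, k <= k1.+1, k1 <= k.+1, k <= k2.+1 & k2 <= k.+1].
Proof.
move=> d1 h1 d2 h2; have [k [dk ? ?]] := dist_nbr d1 h1; have [k' [dk' ? ?]] := dist_nbr d2 h2.
by have eq_k := dist_uniq dk dk'; subst k'; exists k.
Qed.

Lemma last_take_nth (x : T) p i : i <= size p -> last x (take i p) = nth x (x :: p) i.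
Proof.
move=> ip; rewrite (last_nth x) size_takel //.
by have -> : x :: take i p = take i.+1 (x :: p) by []; rewrite nth_take.
Qed.

Lemma dist_geodesic_prefix x y k p : D x y k -> size p = k -> path e x p -> last x p = y ->
  forall i, i <= k -> D x (nth x (x :: p) i) i.
Proof.
move=> d sz pp lp i ik; rewrite -last_take_nth ?sz //.
have szi : size (take i p) = i by rewrite size_takel ?sz.
apply: (@dist_prefix _ _ y _ (k - i)); last by rewrite subnKC.
  by exists (take i p); rewrite szi take_path.
exists (drop i p); rewrite size_drop sz; split=> //.
  by move: pp; rewrite -{1}(cat_take_drop i p) cat_path => /andP[].
by rewrite -last_cat cat_take_drop.
Qed.

Lemma geodesic x y k : D x y k -> exists p, [/\ size p = k, path e x p, last x p = y,
  uniq (x :: p) & forall z i, D x z i -> k <= i -> z != y -> z \notin x :: p].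
Proof.
move=> d; have [[p [sz pp lp]] _] := d; exists p; split=> //.
  apply/(uniqP x) => i j; rewrite !inE /= sz !ltnS => ik jk eq_ij.
  have := dist_geodesic_prefix d sz pp lp ik; rewrite eq_ij => di.
  exact: dist_uniq di (dist_geodesic_prefix d sz pp lp jk).
move=> z i dz ki; apply: contraNN => zp.
have ik : index z (x :: p) <= k by move: zp; rewrite -index_mem /= sz.
have dzi : D x z (index z (x :: p)).
  by rewrite -{1}(nth_index x zp); apply: dist_geodesic_prefix d sz pp lp _ ik.
have eq_ik : index z (x :: p) = k by rewrite -(dist_uniq dz dzi) in ik *; lia.
by rewrite -(nth_index x zp) eq_ik -sz -lp -last_nth.
Qed.

End Walks.

Section Girth.
Variables (T : finType) (e : rel T) (g : nat).
Hypotheses (esym : symmetric e) (eirr : irreflexive e) (gi : girth_at_least e g).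

Notation D := (dist_eq e).

Lemma rev_path_sym x p v : path e x (rcons p v) -> path e v (rev (x :: p)).
Proof.
move=> h; have := rev_path e x (rcons p v).
rewrite last_rcons belast_rcons => ->.
by rewrite (@eq_path _ _ e) // => u w; rewrite esym.
Qed.

Lemma fork_cycle x p q v :
  path e x (rcons p v) -> path e x (rcons q v) ->
  uniq (x :: rcons p v) -> uniq (x :: rcons q v) -> ~~ has (mem q) p ->
  cycle e (x :: p ++ v :: rev q) && uniq (x :: p ++ v :: rev q).
Proof.
move=> pp pq up uq pq_disj; apply/andP; split.
  rewrite /= rcons_cat /= -rev_cons cat_path /=.
  by move: pp; rewrite rcons_path => /andP[-> ->]; rewrite rev_path_sym.
move: up uq; rewrite /= !mem_cat !mem_rcons !inE mem_rev !negb_or rcons_uniq.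
rewrite cat_uniq /= rev_uniq mem_rev rcons_uniq !has_rev => /and3P[/andP[xv xp] vp up].
case/and3P=> [/andP[_ xq] vq uq]; rewrite xp xv xq (negbTE vp) up vq uq /=.
by rewrite andbT; apply/hasPn=> z zq; apply: contra pq_disj => zp; apply/hasP; exists z.
Qed.

(* Two paths from x which leave x by different edges but end at the same vertex
   contain a cycle, so their total length is at least the girth: the prefixes
   of both paths up to the first vertex v of the first path lying on the second
   close a cycle through x and v (fork_cycle). *)
Lemma diverging_paths_long x u p u' q : u != u' ->
  uniq (x :: u :: p) -> uniq (x :: u' :: q) ->
  path e x (u :: p) -> path e x (u' :: q) -> last u p = last u' q ->
  g <= size (u :: p) + size (u' :: q).
Proof.
move=> uu' up uq pp pq lpq; set P := u :: p in up pp *; set Q := u' :: q in uq pq *.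
have hasQ : has (mem Q) P.
  by apply/hasP; exists (last u p); [exact: mem_last | rewrite /= lpq mem_last].
set i := find (mem Q) P; set v := nth x P i.
have iP : i < size P by rewrite -has_find.
have vQ : v \in Q := nth_find x hasQ.
set j := index v Q; have jQ : j < size Q by rewrite index_mem.
have takeP : take i.+1 P = rcons (take i P) v by rewrite (take_nth x iP).
have takeQ : take j.+1 Q = rcons (take j Q) v by rewrite (take_nth x jQ) nth_index.
have prefix_ok R n : uniq (x :: R) -> path e x R -> uniq (x :: take n R) && path e x (take n R).
  by move=> uR pR; rewrite take_path // andbT; apply: (take_uniq n.+1 uR).
have /andP[uP' pP'] := prefix_ok P i.+1 up pp; have /andP[uQ' pQ'] := prefix_ok Q j.+1 uq pq.
rewrite takeP in uP' pP'; rewrite takeQ in uQ' pQ'.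
have disj : ~~ has (mem (take j Q)) (take i P).
  apply/hasPn => z zP; apply/negP => /mem_take zQ.
  have: has (mem Q) (take i P) by apply/hasP; exists z.
  by rewrite has_take // ltnn.
have /andP[cyc ucyc] := fork_cycle pP' pQ' uP' uQ' disj.
have ij : 0 < i + j.
  rewrite addn_gt0 !lt0n; apply: contraNT uu'; rewrite negb_or !negbK => /andP[/eqP i0 /eqP j0].
  have vu : v = u by rewrite /v i0.
  by rewrite -vu -(nth_index x vQ) -/j j0.
have := gi ucyc; rewrite /= size_cat /= size_rev !size_take iP jQ => /(_ _ cyc).
have i_j_3 : 2 < (i + j.+1).+1 by rewrite addnS !ltnS.
by move=> /(_ i_j_3) /leq_trans; apply; rewrite -addSn leq_add.
Qed.

Lemma short_paths_unique x p q : size p + size q < g ->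
  uniq (x :: p) -> uniq (x :: q) -> path e x p -> path e x q -> last x p = last x q -> p = q.
Proof.
elim: p x q => [|u p IH] x [|u' q] // sz.
- by move=> _ /andP[xq _] _ _ /= lq; move: (mem_last u' q); rewrite -lq (negbTE xq).
- by move=> /andP[xp _] _ _ _ /= lp; move: (mem_last u p); rewrite lp (negbTE xp).
move=> up uq pp pq lpq; case: (eqVneq u u') => [eq_uu'|uu']; last first.
  by have := diverging_paths_long uu' up uq pp pq lpq; rewrite leqNgt sz.
rewrite -eq_uu' in uq pq lpq *; congr (_ :: _); apply: (IH u) => //=.
- by move: sz => /=; lia.
- by case/andP: up.
- by case/andP: uq.
- by case/andP: pp.
- by case/andP: pq.
Qed.

Lemma parent_unique r v u u' k : D r v k.+1 -> e u v -> e u' v -> D r u k -> D r u' k ->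
  k.+1 + k.+1 < g -> u = u'.
Proof.
move=> dv uv u'v du du' small.
have [p [sz pp lp up off]] := geodesic du; have [p' [sz' pp' lp' up' off']] := geodesic du'.
have vu : v != u by apply: dist_neq dv du _; rewrite eqn_leq ltnn.
have vu' : v != u' by apply: dist_neq dv du' _; rewrite eqn_leq ltnn.
have ext : rcons p v = rcons p' v.
  apply: (short_paths_unique (x := r)); rewrite ?size_rcons ?sz ?sz' //.
  - by rewrite -rcons_cons rcons_uniq up (off _ _ dv (leqnSn k) vu).
  - by rewrite -rcons_cons rcons_uniq up' (off' _ _ dv (leqnSn k) vu').
  - by rewrite rcons_path pp lp uv.
  - by rewrite rcons_path pp' lp' u'v.
  - by rewrite !last_rcons.
by rewrite -lp -lp' (rcons_injl _ ext).
Qed.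

Lemma no_layer_edge r v v' k : D r v k -> D r v' k -> e v v' -> k + k.+1 < g -> False.
Proof.
move=> dv dv' vv' small.
have [p [sz pp lp up _]] := geodesic dv; have [p' [sz' pp' lp' up' off']] := geodesic dv'.
have v_v' : v != v' by apply: contraTneq vv' => ->; rewrite eirr.
have ext : p = rcons p' v.
  apply: (short_paths_unique (x := r)); rewrite ?size_rcons ?sz ?sz' //.
  - by rewrite -rcons_cons rcons_uniq up' (off' _ _ dv (leqnn k) v_v').
  - by rewrite rcons_path pp' lp' esym vv'.
  - by rewrite last_rcons.
by move: sz; rewrite ext size_rcons sz'; lia.
Qed.

Lemma child_layer r u v w k : D r u k -> e u v -> D r v k.+1 -> e v w -> w != u ->
  k.+1 + k.+2 < g -> D r w k.+2.
Proof.
move=> du uv dv vw wu small.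
have [k' [dw k'1 k'2]] := dist_nbr esym dv vw.
have : k' = k \/ k' = k.+1 \/ k' = k.+2 by lia.
case=> [eq_k'|[eq_k'|eq_k']]; subst k' => //; exfalso.
- by move/eqP: wu; apply; apply: parent_unique dv _ uv dw du _; [rewrite esym | lia].
- by apply: no_layer_edge dv dw vw _; lia.
Qed.

End Girth.

Section Packings.
Variables (T : finType) (e : rel T).

Definition apart (x y : T) := forall z, e x z -> e y z -> False.

Definition covered (A : {set T}) (v : T) :=
  exists2 x, x \in A & x != v /\ exists z, e x z && e v z.

Lemma open_packingP (P : {set T}) :
  reflect {in P &, forall x y, x != y -> apart x y} (open_packing e P).
Proof.
apply: (iffP forall_inP) => [op x y xP yP xy z xz yz | op x xP].
  by move: (op x xP) => /forall_inP /(_ y yP) /implyP /(_ xy) /forallP /(_ z); rewrite xz yz.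
apply/forall_inP => y yP; apply/implyP => xy; apply/forallP => z.
by apply/negP => /andP[xz yz]; apply: op xz yz.
Qed.

Lemma apart_sym x y : apart x y -> apart y x.
Proof. by move=> xy z yz xz; apply: xy xz yz. Qed.

Lemma apart_neq x y z : apart x y -> e x z -> x != y.
Proof. by move=> xy xz; apply: contraPneq xy => <-; move/(_ z xz xz). Qed.

Lemma packing2 x y : apart x y -> open_packing e [set x; y].
Proof.
move=> xy; apply/open_packingP => u v; rewrite !inE.
by case/orP=> /eqP-> /orP[]/eqP->; rewrite ?eqxx // => _; first [done | apply: apart_sym].
Qed.

Lemma packing3 x y z : apart x y -> apart x z -> apart y z -> open_packing e [set x; y; z].
Proof.
move=> xy xz yz; apply/open_packingP => u v; rewrite !inE.
case/orP=> [/orP[]|] /eqP-> /orP[/orP[]|] /eqP->; rewrite ?eqxx // => _;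
  by first [done | apply: apart_sym].
Qed.

Lemma leaf_nbr_unique x y y' : leaf e x -> e x y -> e x y' -> y = y'.
Proof.
rewrite /leaf /deg => /eqP/cards1P[z nbz] xy xy'.
have : y \in nbhd e x by rewrite inE.
have : y' \in nbhd e x by rewrite inE.
by rewrite nbz !inE => /eqP-> /eqP->.
Qed.

Lemma nonleaf_other_nbr x y : e x y -> ~ leaf e x -> exists2 y', e x y' & y' != y.
Proof.
move=> xy nleaf; have [/existsP[y' /andP[]]|] := boolP [exists y', e x y' && (y' != y)].
  by exists y'.
rewrite negb_exists => /forallP only_y; exfalso; apply: nleaf.
rewrite /leaf /deg; apply/eqP/cards1P; exists y; apply/setP => z; rewrite !inE.
by case: (eqVneq z y) => [->|zy]; [rewrite xy | move: (only_y z); rewrite zy andbT => /negbTE].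
Qed.

Lemma leaves_apart x y sx sy : leaf e x -> leaf e y -> e x sx -> e y sy -> sx != sy -> apart x y.
Proof.
move=> lx ly xsx ysy sxy z xz yz; move: sxy.
by rewrite (leaf_nbr_unique lx xsx xz) (leaf_nbr_unique ly ysy yz) eqxx.
Qed.

Lemma leaves3 x y z sx sy sz : leaf e x -> leaf e y -> leaf e z ->
  e x sx -> e y sy -> e z sz -> sx != sy -> sx != sz -> sy != sz ->
  open_packing e [set x; y; z] /\ #|[set x; y; z]| = 3.
Proof.
move=> lx ly lz xsx ysy zsz sxy sxz syz.
have xy := leaves_apart lx ly xsx ysy sxy; have xz := leaves_apart lx lz xsx zsz sxz.
have yz := leaves_apart ly lz ysy zsz syz; split; first exact: packing3.
have -> : [set x; y; z] = x |: [set y; z] by apply/setP => u; rewrite !inE orbA.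
by rewrite !cardsU1 !cards1 !inE negb_or (apart_neq xy xsx) (apart_neq xz xsx) (apart_neq yz ysy).
Qed.

Lemma covered_nbr (A : {set T}) x u v : x \in A -> e x u -> e v u -> v = x \/ covered A v.
Proof.
move=> xA xu vu; case: (eqVneq x v) => [->|xv]; first by left.
by right; exists x => //; split=> //; exists u; rewrite xu vu.
Qed.

Lemma bigmin_le (I : finType) (P : pred I) (F : I -> nat) d j :
  P j -> \big[minn/d]_(i | P i) F i <= F j.
Proof.
move=> Pj; have : j \in index_enum I by rewrite mem_index_enum.
elim: (index_enum I) => // i r IH; rewrite inE big_cons => /orP[/eqP <-|jr].
  by rewrite Pj geq_minl.
by case: (P i); [rewrite geq_min IH ?orbT | exact: IH].
Qed.

(* Extend the open packing A to a maximal
   one P of largest size, so that rho_oL <= |P|.  If every vertex of Y is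
   covered by A, Y avoids P; if every vertex meeting Y lies in X or is covered
   by A, then (P minus X) plus Y is again an open packing, whence
   |P| - |X| + |Y| <= rho_o = rho_oL <= |P|. *)
Lemma U_exchange (A X Y : {set T}) : in_U e -> open_packing e A -> X \subset A ->
  open_packing e Y -> {in Y, forall y, covered A y} ->
  (forall y u v, y \in Y -> e y u -> e v u -> v != y -> v \in X \/ covered A v) ->
  #|Y| <= #|X|.
Proof.
move=> inU opA XA opY Ycov Ymeet.
pose ext := [pred P : {set T} | open_packing e P && (A \subset P)].
have extA : ext A by rewrite /= opA subxx.
have [P /andP[opP AP] Pmax] := @arg_maxnP _ A ext (fun P => #|P|) extA.
have maxP : maximal_open_packing e P.
  rewrite /maximal_open_packing opP; apply/forallP => Q; apply/implyP => /andP[opQ PQ].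
  by rewrite eq_sym eqEcard PQ; apply: Pmax; rewrite /= opQ (subset_trans AP PQ).
have covered_out v : covered A v -> v \notin P.
  case=> x xA [xv [z /andP[xz vz]]]; apply/negP => vP.
  by move/open_packingP: opP => /(_ x v (subsetP AP x xA) vP xv); apply; [exact: xz|].
have YP : [disjoint P & Y].
  rewrite disjoint_sym; apply/pred0P => y /=; apply/andP => -[yY yP].
  by move: (covered_out y (Ycov y yY)); rewrite yP.
set Q := (P :\: X) :|: Y.
have opQ : open_packing e Q.
  have meet y v : y \in Y -> v \notin X -> v \in P -> y != v -> apart y v.
    move=> yY vX vP yv z yz vz; case: (Ymeet y z v yY yz vz); first by rewrite eq_sym.
      by rewrite (negbTE vX).
    by move/covered_out; rewrite vP.
  apply/open_packingP => x y; rewrite !inE => /orP[/andP[xX xP]|xY] /orP[/andP[yX yP]|yY] xy.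
  - by move/open_packingP: opP; apply.
  - by apply: apart_sym; apply: meet; rewrite // eq_sym.
  - exact: meet.
  - by move/open_packingP: opY; apply.
have cardQ : #|Q| = #|P| - #|X| + #|Y|.
  rewrite cardsU (disjoint_setI0 (disjointWl (subsetDl P X) YP)) cards0 subn0.
  by rewrite cardsDS // (subset_trans XA AP).
have leXP : #|X| <= #|P| by apply/subset_leq_card/(subset_trans XA AP).
have LP : rho_oL e <= #|P| by apply: bigmin_le.
have LQ : #|Q| <= rho_o e by apply: (leq_bigmax_cond Q).
by move: inU LP LQ; rewrite /in_U cardQ => ->; lia.
Qed.

Lemma leaves_exchange (A Y : {set T}) : in_U e -> open_packing e A -> open_packing e Y ->
  {in Y, forall y, leaf e y /\ covered A y} -> #|Y| <= #|A|.
Proof.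
move=> inU opA opY Yleaf; apply: U_exchange (subxx A) opY _ _ => //.
  by move=> y /Yleaf[].
move=> y u v /Yleaf[ly [x xA [_ [z /andP[xz yz]]]]] yu vu _.
rewrite (leaf_nbr_unique ly yu yz) in vu.
by case: (covered_nbr xA xz vu) => [->|]; [left | right].
Qed.

End Packings.

Section Claim2.
Variables (T : finType) (e : rel T).
Hypotheses (esym : symmetric e) (eirr : irreflexive e) (gi : girth_at_least e 15).
Hypothesis inU : in_U e.

Variables (s1 a b s : T).
Hypotheses (s1a : e s1 a) (ab : e a b) (bs : e b s) (ds : dist_eq e s1 s 3).

Notation D := (dist_eq e s1).

Lemma dist_a : D a 1.
Proof. exact/(dist1 eirr). Qed.

Lemma dist_b : D b 2.
Proof.
apply: (@dist_prefix _ _ _ _ s 2 1) ds; last exact/walk1.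
by exists [:: a; b]; rewrite /= s1a ab.
Qed.

Lemma s1_s_nonadjacent : ~ e s1 s.
Proof. by move/(dist1 eirr)/(dist_uniq ds). Qed.

Lemma parent_of_b x : e x b -> D x 1 -> x = a.
Proof. by move=> xb dx; apply: (parent_unique esym gi dist_b xb ab dx dist_a). Qed.

Lemma parent_of_s x : e x s -> D x 2 -> x = b.
Proof. by move=> xs dx; apply: (parent_unique esym gi ds xs bs dx dist_b). Qed.

Lemma b_not_leaf : ~ leaf e b.
Proof.
move=> lb; have ba : e b a by rewrite esym.
by move: (dist_neq dist_a ds isT); rewrite (leaf_nbr_unique lb ba bs) eqxx.
Qed.

Lemma s_not_leaf l : e s l -> leaf e l -> ~ leaf e s.
Proof.
move=> sl ll ls; have sb : e s b by rewrite esym.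
by apply: b_not_leaf; rewrite (leaf_nbr_unique ls sb sl).
Qed.

Lemma side_layer2 c w : e s1 c -> e c w -> w != s1 -> D w 2.
Proof.
move=> s1c cw ws1; have dc : D c 1 by apply/(dist1 eirr).
exact: (child_layer esym eirr gi (dist_refl e s1) s1c dc cw ws1 isT).
Qed.

Lemma side_not_adj_b c : e s1 c -> c != a -> ~ e c b.
Proof. by move=> s1c ca cb; move: ca; rewrite (parent_of_b cb _) ?eqxx //; apply/(dist1 eirr). Qed.

Lemma side_apart_s c : e s1 c -> c != a -> apart e c s.
Proof.
move=> s1c ca z cz sz; have dc : D c 1 by apply/(dist1 eirr).
have [k [dz k1 _ _ k4]] := dist_common esym dc cz ds sz.
have k_2 : k = 2 by apply/eqP; rewrite eqn_leq k1; exact: k4.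
rewrite k_2 in dz; apply: (side_not_adj_b s1c ca).
by rewrite -(parent_of_s _ dz) // esym.
Qed.

(* Then the open packing {c, s} covers the three
   leaves at s1, w and t, contradicting the exchange principle. *)
Lemma no_support_beside_a l1 l t lt c w lw :
  e s1 l1 -> leaf e l1 -> e s l -> leaf e l -> e s t -> e t lt -> leaf e lt ->
  e s1 c -> c != a -> e c w -> w != s1 -> e w lw -> leaf e lw -> False.
Proof.
move=> s1l1 ll1 sl ll st tlt llt s1c ca cw ws1 wlw llw.
have l1s1 : e l1 s1 by rewrite esym.
have cs1 : e c s1 by rewrite esym.
have lww : e lw w by rewrite esym.
have ltt : e lt t by rewrite esym.
have s1_w : s1 != w by rewrite eq_sym.
have s1_t : s1 != t by apply: contraPneq s1_s_nonadjacent => ->; rewrite esym.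
have w_t : w != t.
  apply: contraPneq (side_not_adj_b s1c ca) => wt.
  by rewrite -(parent_of_s _ (side_layer2 s1c cw ws1)) // wt esym.
have [opY cardY] := leaves3 ll1 llw llt l1s1 lww ltt s1_w s1_t w_t.
have cov_l1 : covered e [set c; s] l1.
  exists c; rewrite ?inE ?eqxx //; split; last by exists s1; rewrite l1s1 cs1.
  by apply: contraNneq ws1 => cl1; rewrite -cl1 in ll1; rewrite (leaf_nbr_unique ll1 cw cs1).
have cov_lw : covered e [set c; s] lw.
  exists c; rewrite ?inE ?eqxx //; split; last by exists w; rewrite cw lww.
  by apply: contraNneq ws1 => clw; rewrite -clw in llw; rewrite (leaf_nbr_unique llw cw cs1).
have cov_lt : covered e [set c; s] lt.
  exists s; rewrite ?inE ?eqxx ?orbT //; split; last by exists t; rewrite st ltt.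
  by apply: contraPneq (s_not_leaf sl ll) => ->.
have Ycov : {in [set l1; lw; lt], forall y, leaf e y /\ covered e [set c; s] y}.
  by move=> y; rewrite !inE => /orP[/orP[]|] /eqP->.
have := leaves_exchange inU (packing2 (side_apart_s s1c ca)) opY Ycov.
by rewrite cardY cards2; case: (c != s).
Qed.

Section FarFromSupports.
Variables (l : T).
Hypotheses (sl : e s l) (ll : leaf e l).
Hypothesis s1_single : forall c, e s1 c -> ~ support_vertex e c.
Hypothesis no_side_support :
  forall c w, e s1 c -> c != a -> e c w -> w != s1 -> ~ support_vertex e w.

Definition side_set := [set w | [exists c, [&& e s1 c, c != a, e c w & w != s1]]].

Definition escape (w z : T) := [exists u, [&& e w u, e u z, z != w & ~~ e s1 u]].

Definition grandchild (w : T) := odflt w [pick z | escape w z].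

Lemma side_layer w : w \in side_set -> exists c, [/\ e s1 c, c != a, e c w & D w 2].
Proof.
rewrite inE => /existsP[c /and4P[s1c ca cw ws1]].
by exists c; split=> //; apply: side_layer2 s1c cw ws1.
Qed.

Lemma b_not_side : b \notin side_set.
Proof.
by apply/negP => /side_layer[c [s1c ca cb _]]; apply: (side_not_adj_b s1c ca).
Qed.

Lemma grandchild_escapes w : w \in side_set -> escape w (grandchild w).
Proof.
move=> wS; rewrite /grandchild; case: pickP => [z //|no_escape]; exfalso.
have [c [s1c ca cw dw]] := side_layer wS.
have wc : e w c by rewrite esym.
have [u wu uc] : exists2 u, e w u & u != c.
  by apply: nonleaf_other_nbr wc _ => lw; apply: (s1_single s1c); exists w.
have ws1 : w != s1 by apply: dist_neq dw (dist_refl e s1) _.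
have uw : e u w by rewrite esym.
have [z uz zw] : exists2 z, e u z & z != w.
  by apply: nonleaf_other_nbr uw _ => lu; apply: (no_side_support s1c ca cw ws1); exists u.
have s1u : ~~ e s1 u.
  apply: contra uc => s1u; apply/eqP.
  by apply: (parent_unique esym gi dw uw cw) => //; apply/(dist1 eirr).
by move: (no_escape z); rewrite /escape; case: existsP => // -[]; exists u; rewrite wu uz zw.
Qed.

Lemma grandchild_layers w : w \in side_set ->
  exists2 u, e w u /\ e u (grandchild w) & D u 3 /\ D (grandchild w) 4.
Proof.
move=> wS; have [c [s1c ca cw dw]] := side_layer wS.
have /existsP[u /and4P[wu uz zw s1u]] := grandchild_escapes wS.
have dc : D c 1 by apply/(dist1 eirr).
have uc : u != c by apply: contraNneq s1u => ->.
have du : D u 3 := child_layer esym eirr gi dc cw dw wu uc isT.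
by exists u; split=> //; apply: (child_layer esym eirr gi dw wu du uz zw isT).
Qed.

Lemma b_apart_grandchild w : w \in side_set -> apart e b (grandchild w).
Proof.
move=> wS m bm zm; have [u [wu uz] [du dz]] := grandchild_layers wS.
have [k [dm k1 k2 k3 k4]] := dist_common esym dist_b bm dz zm.
have k_3 : k = 3 by apply/eqP; rewrite eqn_leq k1; exact: k4.
rewrite k_3 in dm; have mz : e m (grandchild w) by rewrite esym.
have m_u : m = u := parent_unique esym gi dz mz uz dm du isT.
have [_ [_ _ _ dw]] := side_layer wS.
have bw : b = w by rewrite m_u in bm; apply: (parent_unique esym gi du bm wu dist_b dw).
by move: b_not_side; rewrite bw wS.
Qed.

Lemma grandchildren_apart w w' : w \in side_set -> w' \in side_set ->
  grandchild w != grandchild w' -> apart e (grandchild w) (grandchild w').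
Proof.
move=> wS w'S zz' m zm z'm.
have [u [wu uz] [du dz]] := grandchild_layers wS.
have [u' [wu' uz'] [du' dz']] := grandchild_layers w'S.
have [k [dm k1 k2 _ _]] := dist_common esym dz zm dz' z'm.
have mz : e m (grandchild w) by rewrite esym.
have mz' : e m (grandchild w') by rewrite esym.
move/eqP: zz'; apply; have : k = 3 \/ k = 4 \/ k = 5 by move: k1 k2; clear; lia.
case=> [k_3|[k_4|k_5]]; subst k.
- rewrite -(parent_unique esym gi dz mz uz dm du isT) in wu.
  rewrite -(parent_unique esym gi dz' mz' uz' dm du' isT) in wu'.
  have [_ [_ _ _ dw]] := side_layer wS; have [_ [_ _ _ dw']] := side_layer w'S.
  by rewrite (parent_unique esym gi dm wu wu' dw dw' isT).
- by case: (no_layer_edge esym eirr gi dz dm zm isT).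
- by rewrite (parent_unique esym gi dm zm z'm dz dz' isT).
Qed.

Definition side_packing := b |: (grandchild @: side_set).

Lemma side_packing_open : open_packing e side_packing.
Proof.
apply/open_packingP => x y; rewrite !inE.
case/orP=> [/eqP->|/imsetP[w wS ->]] /orP[/eqP->|/imsetP[w' w'S ->]] xy.
- by rewrite eqxx in xy.
- exact: b_apart_grandchild.
- exact/apart_sym/b_apart_grandchild.
- exact: grandchildren_apart.
Qed.

(* The open packing side_packing covers everything around {l, s1} except b;
   exchanging b for l and s1 contradicts the exchange principle. *)
Lemma far_from_supports_absurd : False.
Proof.
set A := side_packing.
have bA : b \in A by rewrite !inE eqxx.
have ls : e l s by rewrite esym.
have l_s1 : apart e l s1.
  by move=> z lz s1z; apply: s1_s_nonadjacent; rewrite (leaf_nbr_unique ll ls lz).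
have near_b v u : e b u -> e v u -> v \in [set b] \/ covered e A v.
  by move=> bu vu; case: (covered_nbr bA bu vu) => [->|]; [left; rewrite inE | right].
have Ycov : {in [set l; s1], forall y, covered e A y}.
  move=> y; rewrite !inE => /orP[]/eqP->; exists b => //.
  - by split; [apply: contraPneq b_not_leaf => -> | exists s; rewrite bs ls].
  - split; last by exists a; rewrite esym ab s1a.
    exact: dist_neq dist_b (dist_refl e s1) isT.
have Ymeet y u v : y \in [set l; s1] -> e y u -> e v u -> v != y ->
    v \in [set b] \/ covered e A v.
  case/set2P=> -> yu vu vy.
    by apply: (near_b v s bs); rewrite (leaf_nbr_unique ll ls yu).
  have [ua|ua] := eqVneq u a; first by rewrite ua in vu; apply: (near_b v a _ vu); rewrite esym.
  have vS : v \in side_set by rewrite inE; apply/existsP; exists u; rewrite yu ua esym vu vy.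
  have [u' [vu' u'z] [_ dz]] := grandchild_layers vS; have [_ [_ _ _ dv]] := side_layer vS.
  right; exists (grandchild v); first by rewrite !inE imset_f ?orbT.
  split; first exact: dist_neq dz dv isT.
  by exists u'; rewrite vu' esym u'z.
have := U_exchange inU side_packing_open _ (packing2 l_s1) Ycov Ymeet.
by rewrite sub1set bA cards2 cards1 (apart_neq l_s1 ls) => /(_ isT).
Qed.

End FarFromSupports.

End Claim2.

Theorem claim2 (T : finType) (e : rel T) :
  simple_graph e ->
  connected_graph e ->
  min_degree_one e ->
  girth_at_least e 15 ->
  in_U e ->
  forall s1 : T, single_star_support e s1 ->
  ~ (exists s : T, double_star_support e s /\ dist_eq e s1 s 3).
Proof.
move=> [esym eirr] _ _ gi inU s1 [[l1 [s1l1 ll1]] s1_single]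
  [s [[[l [sl ll]] [t [st [lt [tlt llt]]]]] ds]].
have [[[|a [|b [|s' [|? ?]]]] [//= _ /and4P[s1a ab bs _] s'_s]] _] := ds.
rewrite {}s'_s in bs.
apply: (far_from_supports_absurd esym eirr gi inU s1a ab bs ds sl ll s1_single).
move=> c w s1c ca cw ws1 [lw [wlw llw]].
exact: (no_support_beside_a esym eirr gi inU s1a ab bs ds s1l1 ll1 sl ll st tlt llt
  s1c ca cw ws1 wlw llw).
Qed.
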